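(* Let $\Gamma$ be an infinite finitely generated group, $\Gamma\rhd\Gamma_1\rhd\Gamma_2\rhd\cdots$ a nested sequence of finite index normal subgroups with $\bigcap_n\Gamma_n=\{1\}$, $S$ a finite generating set of $\Gamma$, and $\mathcal{G}=\{G_n\}$ with $G_n$ the Cayley graph of $\Gamma/\Gamma_n$ with respect to $S$. Then for every $k\ge1$, $$\frac{d(\Gamma_k)}{|\Gamma:\Gamma_k|}+1\ge c(\mathcal{G}),$$ where $d(\Gamma_k)$ is the minimal number of generators of $\Gamma_k$.
   Context: The Cayley graph of $\Gamma/\Gamma_n$ w.r.t. $S$ has vertex set $\Gamma/\Gamma_n$, with $x\ne y$ adjacent iff $y=sx$ or $x=sy$ for some $s\in S$. A graph sequence is a sequence $\{G_n\}$ of finite simple graphs with uniformly bounded degrees and $|V(G_n)|\to\infty$. For graph sequences with $V(H_n)=V(G_n)$, $\mathcal{H}\prec\mathcal{G}$ means there is an integer $L>0$ with $d_{G_n}(x,y)\le L\,d_{H_n}(x,y)$ for all $n,x,y$ (shortest path metrics); $\mathcal{G}\simeq\mathcal{H}$ means $\mathcal{H}\prec\mathcal{G}$ and $\mathcal{G}\prec\mathcal{H}$. $e(\mathcal{G})=\liminf_n|E(G_n)|/|V(G_n)|$ and $c(\mathcal{G})=\inf_{\mathcal{H}\simeq\mathcal{G}}e(\mathcal{H})$. *)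

From HB Require Import structures.
From mathcomp Require Import all_boot all_order all_algebra.
From mathcomp Require Import boolp classical_sets reals ereal sequences.
From Stdlib Require List.
Set Implicit Arguments. Unset Strict Implicit. Unset Printing Implicit Defensive.
Import Order.TTheory GRing.Theory Num.Theory.

Section Groups.
Variables (T : Type) (mul : T -> T -> T) (one : T) (inv : T -> T).

Definition is_group : Prop :=
  [/\ (forall x y z, mul x (mul y z) = mul (mul x y) z),
      (forall x, mul one x = x) & (forall x, mul (inv x) x = one)].

Definition infinite_carrier : Prop := forall l : seq T, exists x, ~ List.In x l.

Definition is_subgroup (H : T -> Prop) : Prop :=
  H one /\ forall x y, H x -> H y -> H (mul x (inv y)).

Definition is_normal (H : T -> Prop) : Prop :=
  is_subgroup H /\ forall g x, H x -> H (mul (mul g x) (inv g)).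

Inductive gen (A : T -> Prop) : T -> Prop :=
| gen_one : gen A one
| gen_in x : A x -> gen A x
| gen_inv x : gen A x -> gen A (inv x)
| gen_mul x y : gen A x -> gen A y -> gen A (mul x y).

Definition generates (l : seq T) (H : T -> Prop) : Prop :=
  (forall x, List.In x l -> H x) /\
  (forall x, H x <-> gen (fun y => List.In y l) x).

Definition min_num_gens (H : T -> Prop) (d : nat) : Prop :=
  (exists l : seq T, size l = d /\ generates l H) /\
  (forall l : seq T, generates l H -> (d <= size l)%N).

(* pi : T -> 'I_m identifies 'I_m with the left coset space T/H:
   pi is onto and its fibres are exactly the cosets xH. *)
Definition coset_labelling (H : T -> Prop) (m : nat) (pi : T -> 'I_m) : Prop :=
  (forall i, exists x, pi x = i) /\
  (forall x y, pi x = pi y <-> H (mul (inv x) y)).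

Definition cayley_adj (S : seq T) (m : nat) (pi : T -> 'I_m) : rel 'I_m :=
  fun i j => `[< i <> j /\ exists x s, List.In s S /\
       ((pi x = i /\ pi (mul s x) = j) \/ (pi x = j /\ pi (mul s x) = i)) >].
End Groups.

Section GraphSeq.
Variable N : nat -> nat.
Definition gseq := forall n, rel 'I_(N n).

Definition is_graph_seq (G : gseq) : Prop :=
  [/\ (forall n x, ~~ G n x x),
      (forall n x y, G n x y = G n y x),
      (exists D, forall n x, (#|[set y | G n x y]| <= D)%N) &
      (forall B, exists n0, forall n, (n0 <= n)%N -> (B <= N n)%N)].

Definition dist_le (G : gseq) n (x y : 'I_(N n)) (k : nat) : Prop :=
  exists p : seq 'I_(N n), [&& path (G n) x p, last x p == y & (size p <= k)%N].

(* H ≺ G : exists L > 0, d_G <= L d_H  (infinite distances allowed) *)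
Definition gprec (H G : gseq) : Prop :=
  exists L : nat, (0 < L)%N /\
    forall n (x y : 'I_(N n)) k, dist_le H x y k -> dist_le G x y (L * k).

Definition gequiv (G H : gseq) : Prop := gprec H G /\ gprec G H.

Definition num_edges (G : gseq) n : nat :=
  #|[set p : 'I_(N n) * 'I_(N n) | (p.1 < p.2)%N && G n p.1 p.2]|.

Definition e_of {R : realType} (G : gseq) : \bar R :=
  limn_einf (fun n => ((num_edges G n)%:R / (N n)%:R : R)%:E).

Definition c_of {R : realType} (G : gseq) : \bar R :=
  ereal_inf [set e | exists H : gseq, [/\ is_graph_seq H, gequiv G H & e = e_of H]].
End GraphSeq.

From HB Require Import structures.
From mathcomp Require Import all_boot all_order all_algebra.
From mathcomp Require Import boolp classical_sets reals ereal sequences.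
From mathcomp Require Import topology normedtype ring.
From Stdlib Require List.
Set Implicit Arguments. Unset Strict Implicit. Unset Printing Implicit Defensive.
Import Order.TTheory GRing.Theory Num.Theory.

(* For n >= k, replace the Cayley graph of Γ/Γ_n by a sparse graph on the same
   vertices: a coset lying in Γ_k is joined to its left translates by the d
   generators of Γ_k, and any other coset xΓ_n gets a single edge to t⁻¹xΓ_n,
   where t is a fixed representative of xΓ_k.  Only |Γ:Γ_n|/|Γ:Γ_k| cosets lie
   in Γ_k, so the sparse graph has at most d|Γ:Γ_n|/|Γ:Γ_k| + |Γ:Γ_n| edges.
   Each sparse edge is a translation by one of finitely many fixed elements,
   hence has bounded Cayley length; conversely a Cayley edge x -- sx becomes the
   sparse path x -> (into Γ_k) -> (by an element of Γ_k from a fixed finite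
   list, written in the d generators) -> sx.  The two graph sequences are thus
   bi-Lipschitz equivalent uniformly in n, and c(G) is bounded by the liminf of
   the edge densities of the sparse graphs. *)

Notation gsubgroup := (is_subgroup *%g 1%g monoid.inv).
Notation ggen := (gen *%g 1%g monoid.inv).
Notation ggenerates := (generates *%g 1%g monoid.inv).
Notation glabelling := (coset_labelling *%g monoid.inv).

Lemma InP (T : eqType) (x : T) (s : seq T) : reflect (List.In x s) (x \in s).
Proof.
elim: s => [|y s IH] /=; first by constructor.
rewrite inE; apply: (iffP predU1P) => [[->|/IH]|[->|/IH]]; by [left|right].
Qed.

Lemma seq_uniform_bound (T : eqType) (P : T -> nat -> Prop) (s : seq T) :
  (forall x r r', r <= r' -> P x r -> P x r') ->
  (forall x, x \in s -> exists r, P x r) -> exists r, forall x, x \in s -> P x r.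
Proof.
move=> Pmono; elim: s => [|y s IH] bounded; first by exists 0.
have [ry Py] := bounded y (mem_head y s).
have [rs Ps] : exists r, forall x, x \in s -> P x r.
  by apply: IH => x xs; apply: bounded; rewrite inE xs orbT.
exists (maxn ry rs) => x /predU1P [->|xs].
  exact: Pmono (leq_maxl _ _) Py.
exact: Pmono (leq_maxr _ _) (Ps x xs).
Qed.

Lemma card_ltn_surj (I J : finType) (f : I -> J) (a b : I) :
  (forall j, exists i, f i = j) -> f a = f b -> a != b -> #|J| < #|I|.
Proof.
move=> f_onto fab ab; rewrite -cardsT -[#|I|]cardsT.
have -> : [set: J] = f @: [set: I].
  apply/setP => j; rewrite inE; have [i <-] := f_onto j.
  by apply/esym/imsetP; exists i.
rewrite ltn_neqAle leq_imset_card andbT; apply/negP => /imset_injP f_inj.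
by move: ab; rewrite (f_inj a b) ?inE ?eqxx.
Qed.

Section GroupOfLaws.
Variables (T : Type) (mul : T -> T -> T) (one : T) (inv : T -> T).
Hypothesis laws : is_group mul one inv.

Let mulA : associative mul. Proof. by case: laws. Qed.
Let mul1 : left_id one mul. Proof. by case: laws. Qed.
Let mulV : left_inverse one inv mul. Proof. by case: laws. Qed.
Let mulVr : right_inverse one inv mul.
Proof. by move=> x; rewrite -[LHS]mul1 -(mulV (inv x)) -mulA (mulA (inv x)) mulV mul1. Qed.
Let mul1r : right_id one mul.
Proof. by move=> x; rewrite -(mulV x) mulA mulVr mul1. Qed.

Definition carrier_of_laws : Type := T.
HB.instance Definition _ := gen_eqMixin carrier_of_laws.
HB.instance Definition _ := gen_choiceMixin carrier_of_laws.
HB.instance Definition _ := isGroup.Build carrier_of_laws mulA mul1 mul1r mulV mulVr.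
Definition group_of_laws : groupType := carrier_of_laws.
End GroupOfLaws.

Section Subgroup.
Local Open Scope group_scope.
Variables (gT : groupType) (H : gT -> Prop).
Hypothesis subH : gsubgroup H.

Lemma subgroup1 : H 1.
Proof. by case: subH. Qed.

Lemma subgroupV x : H x -> H x^-1.
Proof. by case: subH => H1 HM Hx; rewrite -(mul1g x^-1); apply: HM. Qed.

Lemma subgroupM x y : H x -> H y -> H (x * y).
Proof. by case: subH => _ HM Hx Hy; rewrite -(invgK y); apply/HM/subgroupV. Qed.

Lemma gen_subgroup (A : gT -> Prop) :
  (forall x, A x -> H x) -> forall x, ggen A x -> H x.
Proof.
move=> AH x; elim=> [|y /AH //|y _ /subgroupV //|y z _ Hy _ Hz].
  exact: subgroup1.
exact: subgroupM.
Qed.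

Variables (m : nat) (pi : gT -> 'I_m).
Hypothesis piH : glabelling H pi.

Lemma labelling_eqP x y : pi x = pi y <-> H (x^-1 * y).
Proof. by case: piH. Qed.

Lemma labelling_mull g x y : pi x = pi y -> pi (g * x) = pi (g * y).
Proof. by move/labelling_eqP => Hxy; apply/labelling_eqP; rewrite invgM -mulgA mulKg. Qed.

Definition coset_rep (i : 'I_m) : gT := projT1 (cid (piH.1 i)).

Lemma coset_repK i : pi (coset_rep i) = i.
Proof. exact: projT2 (cid (piH.1 i)). Qed.
End Subgroup.

Section Walks.
Variables (N : nat -> nat) (G : gseq N).
Arguments G : clear implicits.

Lemma dist_le_refl n (x : 'I_(N n)) r : dist_le G x x r.
Proof. by exists [::]; rewrite /= eqxx. Qed.

Lemma dist_le_edge n (x y : 'I_(N n)) : G n x y -> dist_le G x y 1.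
Proof. by move=> xy; exists [:: y]; rewrite /= xy eqxx. Qed.

Lemma dist_le_leq n (x y : 'I_(N n)) r r' : r <= r' -> dist_le G x y r -> dist_le G x y r'.
Proof. by move=> rr' [p /and3P [xp py pr]]; exists p; rewrite xp py (leq_trans pr rr'). Qed.

Lemma dist_le_trans n (x y z : 'I_(N n)) r r' :
  dist_le G x y r -> dist_le G y z r' -> dist_le G x z (r + r').
Proof.
move=> [p /and3P [xp /eqP py pr]] [q /and3P [yq /eqP qz qr']].
exists (p ++ q); rewrite cat_path last_cat xp py yq qz eqxx size_cat /=.
exact: leq_add.
Qed.

Lemma dist_le_sym n (x y : 'I_(N n)) r :
  symmetric (G n) -> dist_le G x y r -> dist_le G y x r.
Proof.
move=> Gsym [p /and3P [xp /eqP <- pr]]; apply: dist_le_leq pr _.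
elim: p x xp => [|z p IH] x /=; first by move=> _; apply: dist_le_refl.
move=> /andP [xz zp]; rewrite -addn1; apply: dist_le_trans (IH _ zp) _.
by apply: dist_le_edge; rewrite Gsym.
Qed.

Lemma gprec_of_edges (H : gseq N) L : 0 < L ->
  (forall n (x y : 'I_(N n)), H n x y -> dist_le G x y L) -> gprec H G.
Proof.
move=> L_gt0 Hedge; exists L; split=> // n x y r [p /and3P [xp /eqP <- pr]].
apply: dist_le_leq (leq_mul (leqnn L) pr) _.
elim: p x xp {pr} => [|z p IH] x /=; first by move=> _; apply: dist_le_refl.
by move=> /andP [xz zp]; rewrite mulnS; apply: dist_le_trans (Hedge _ _ _ xz) (IH _ zp).
Qed.
End Walks.

Definition sym_graph (N : nat -> nat) (out : forall n, 'I_(N n) -> seq 'I_(N n)) n :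
    rel 'I_(N n) :=
  fun a b => (a != b) && ((b \in out n a) || (a \in out n b)).
Arguments sym_graph [N] out n.

Section SymGraph.
Variables (N : nat -> nat) (out : forall n, 'I_(N n) -> seq 'I_(N n)).
Arguments out : clear implicits.

Lemma sym_graph_irr n (a : 'I_(N n)) : ~~ sym_graph out n a a.
Proof. by rewrite /sym_graph eqxx. Qed.

Lemma sym_graphC n : symmetric (sym_graph out n).
Proof. by move=> a b; rewrite /sym_graph eq_sym orbC. Qed.

Lemma dist_le_out n (a b : 'I_(N n)) : b \in out n a -> dist_le (sym_graph out) a b 1.
Proof.
have [<- _|ab ba] := eqVneq a b; first exact: dist_le_refl.
by apply: dist_le_edge; rewrite /sym_graph ab ba.
Qed.

Lemma card_sym_graph_nbrs n (a : 'I_(N n)) :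
  #|[set b | sym_graph out n a b]| <= #|[set b | b \in out n a]| + #|[set b | a \in out n b]|.
Proof.
apply: leq_trans (leq_card_setU _ _); apply: subset_leq_card.
by apply/fintype.subsetP => b; rewrite !inE => /andP [].
Qed.

Lemma num_edges_sym_graph n : num_edges (sym_graph out) n <= \sum_a size (out n a).
Proof.
pose Q := [set q : 'I_(N n) * 'I_(N n) | q.2 \in out n q.1].
pose sort_pair (q : 'I_(N n) * 'I_(N n)) := if q.1 < q.2 then q else (q.2, q.1).
have edges_sub : [set q : 'I_(N n) * 'I_(N n) | (q.1 < q.2) && sym_graph out n q.1 q.2]
    \subset sort_pair @: Q.
  apply/fintype.subsetP => -[a b]; rewrite inE /= => /andP [ab /andP [_ /orP [ba|ab']]].
    by apply/imsetP; exists (a, b); rewrite ?inE // /sort_pair /= ab.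
  by apply/imsetP; exists (b, a); rewrite ?inE // /sort_pair /= ltnNge (ltnW ab).
apply: leq_trans (subset_leq_card edges_sub) _; apply: leq_trans (leq_imset_card _ _) _.
rewrite /Q -sum1dep_card big_mkcond.
rewrite -(pair_bigA _ (fun a b => if b \in out n a then 1 else 0)) /=.
apply: leq_sum => a _; rewrite -big_mkcond sum1_card; exact: card_size.
Qed.

Lemma gprec_sym_graph (G : gseq N) L : 0 < L -> (forall n, symmetric (G n)) ->
  (forall n (a b : 'I_(N n)), b \in out n a -> dist_le G a b L) -> gprec (sym_graph out) G.
Proof.
move=> L_gt0 Gsym out_near; apply: gprec_of_edges L_gt0 _ => n a b /andP [_ /orP [] ab].
  exact: out_near.
exact/dist_le_sym/out_near.
Qed.
End SymGraph.
Arguments sym_graphC [N] out n.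

Section Tower.
Local Open Scope group_scope.
Variables (gT : groupType) (Gam : nat -> gT -> Prop) (m : nat -> nat).
Variable pi : forall n, gT -> 'I_(m n).
Hypotheses (Gam_sub : forall n, gsubgroup (Gam n))
  (Gam_nested : forall n x, Gam n.+1 x -> Gam n x)
  (pi_lab : forall n, glabelling (Gam n) (pi n)).

Definition rep n (j : 'I_(m n)) : gT := coset_rep (pi_lab n) j.

Lemma pi_rep n (j : 'I_(m n)) : pi n (rep j) = j.
Proof. exact: coset_repK. Qed.

Lemma pi_eqP n x y : pi n x = pi n y <-> Gam n (x^-1 * y).
Proof. exact: labelling_eqP. Qed.

Lemma pi_mull n g x y : pi n x = pi n y -> pi n (g * x) = pi n (g * y).
Proof. exact: labelling_mull. Qed.

Lemma Gam_le n n' x : (n <= n')%N -> Gam n' x -> Gam n x.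
Proof.
move=> /subnK <-; elim: (n' - n)%N => [//|i IH] /= Gx.
exact/IH/Gam_nested.
Qed.

Lemma pi_rep_le n n' x : (n <= n')%N -> pi n (rep (pi n' x)) = pi n x.
Proof. by move=> le; apply/pi_eqP/(Gam_le le)/pi_eqP; rewrite pi_rep. Qed.

Lemma m_gt0 n : (0 < m n)%N.
Proof. exact: leq_ltn_trans (leq0n _) (ltn_ord (pi n 1)). Qed.

Section Growth.
Hypotheses (gT_inf : infinite_carrier gT)
  (Gam_sep : forall x, (forall n, Gam n x) -> x = 1).

Lemma m_grows N : exists N', forall n, (N' <= n)%N -> (m N < m n)%N.
Proof.
(* A point x off the transversal differs from the representative y of its
   Γ_N-coset; some Γ_N' separates them, so Γ/Γ_n -> Γ/Γ_N is not injective. *)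
have [x x_new] := gT_inf [seq rep j | j <- enum 'I_(m N)].
set y := rep (pi N x).
have [N' notGN'] : exists N', ~ Gam N' (x^-1 * y).
  apply/existsNP => allG; apply: x_new.
  have -> : x = y by rewrite -[x]invgK; apply: mulg1_eq; apply: Gam_sep.
  by apply/InP; rewrite map_f ?mem_enum.
have GN : Gam N (x^-1 * y) by apply/pi_eqP; rewrite pi_rep.
have leNN' : (N <= N')%N.
  by rewrite leqNgt; apply/negP => /ltnW le; apply/notGN'/(Gam_le le).
exists N' => n leN'n; have leNn := leq_trans leNN' leN'n.
rewrite -[m N]card_ord -[m n]card_ord.
apply: (@card_ltn_surj _ _ (fun j => pi N (rep j)) (pi n x) (pi n y)).
- move=> i; have [z <-] := (pi_lab N).1 i.
  by exists (pi n z); apply: pi_rep_le.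
- by rewrite !pi_rep_le // /y pi_rep.
- by apply/eqP => /pi_eqP Gn; apply/notGN'/(Gam_le leN'n).
Qed.

Lemma m_unbounded B : exists n0, forall n, (n0 <= n)%N -> (B <= m n)%N.
Proof.
elim: B => [|B [n0 IH]]; first by exists 0%N.
have [N' grows] := m_grows n0.
exists (maxn n0 N') => n le.
exact: leq_ltn_trans (IH n0 (leqnn n0)) (grows n (leq_trans (leq_maxr _ _) le)).
Qed.
End Growth.

Lemma gen_dist_bounded (G : gseq m) (P : nat -> Prop) (Y A : gT -> Prop) :
  (forall n, symmetric (G n)) ->
  (forall w y, ggen A w -> Y y -> Y (w * y)) ->
  (forall a n y, A a -> P n -> Y y -> dist_le G (pi n y) (pi n (a * y)) 1) ->
  forall w, ggen A w ->
  exists r, forall n y, P n -> Y y -> dist_le G (pi n y) (pi n (w * y)) r.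
Proof.
move=> Gsym Y_closed A_step w.
elim=> [|a Aa|w' gw' [r IH]|w1 w2 _ [r1 IH1] gw2 [r2 IH2]].
- by exists 0%N => n y _ _; rewrite mul1g; apply: dist_le_refl.
- by exists 1%N => n y; apply: A_step.
- exists r => n y Pn Yy; apply: dist_le_sym (Gsym n) _.
  have := IH n (w'^-1 * y) Pn (Y_closed _ _ (gen_inv gw') Yy).
  by rewrite mulVKg.
- exists (r2 + r1)%N => n y Pn Yy; apply: dist_le_trans (IH2 n y Pn Yy) _.
  by rewrite -mulgA; apply: IH1 => //; apply: Y_closed.
Qed.

Variable S : seq gT.

Definition cayley_graph n : rel 'I_(m n) := cayley_adj *%g S (pi n).
Arguments cayley_graph : clear implicits.

Definition cayley_out n (j : 'I_(m n)) : seq 'I_(m n) := [seq pi n (s * rep j) | s <- S].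

Lemma cayley_out_mul n s x : s \in S -> pi n (s * x) \in cayley_out (pi n x).
Proof. by move=> Ss; apply/mapP; exists s => //; apply: pi_mull; rewrite pi_rep. Qed.

Lemma cayley_graphE : cayley_graph = sym_graph cayley_out.
Proof.
apply: functional_extensionality_dep => n; apply/funext => a; apply/funext => b.
apply/asboolP/andP => [[/eqP ab [x [s [/InP Ss xab]]]]|[/eqP ab ba]].
  split=> //; apply/orP.
  by case: xab => [[<- <-]|[<- <-]]; [left|right]; apply: cayley_out_mul.
split=> //; case/orP: ba => /mapP [s Ss ->]; [exists (rep a)|exists (rep b)].
  by exists s; split; [apply/InP | left; rewrite pi_rep].
by exists s; split; [apply/InP | right; rewrite pi_rep].
Qed.

Lemma cayley_graph_sym n : symmetric (cayley_graph n).
Proof. by rewrite cayley_graphE; apply: sym_graphC. Qed.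

Lemma cayley_step n y s : List.In s S -> dist_le cayley_graph (pi n y) (pi n (s * y)) 1.
Proof. by move=> /InP Ss; rewrite cayley_graphE; apply/dist_le_out/cayley_out_mul. Qed.

Section TranslationGraph.
Variables (W : seq gT) (out : forall n, 'I_(m n) -> seq 'I_(m n)).
Arguments out : clear implicits.
Hypothesis out_translates : forall n (j b : 'I_(m n)),
  b \in out n j -> exists2 w, w \in W & b = pi n (w * rep j).

Lemma card_out_le n (a : 'I_(m n)) : (#|[set b | b \in out n a]| <= size W)%N.
Proof.
rewrite -(size_map (fun w => pi n (w * rep a))); apply: leq_trans (card_size _).
apply/subset_leq_card/fintype.subsetP => b; rewrite inE => /out_translates [w Ww ->].
exact: map_f.
Qed.

Lemma card_in_le n (a : 'I_(m n)) : (#|[set b | a \in out n b]| <= size W)%N.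
Proof.
rewrite -(size_map (fun w => pi n (w^-1 * rep a))); apply: leq_trans (card_size _).
apply/subset_leq_card/fintype.subsetP => b; rewrite inE => /out_translates [w Ww ab].
apply/mapP; exists w => //.
have -> : pi n (w^-1 * rep a) = pi n (w^-1 * (w * rep b)) by apply: pi_mull; rewrite pi_rep.
by rewrite mulKg pi_rep.
Qed.

Lemma translation_graph_deg n (a : 'I_(m n)) :
  (#|[set b | sym_graph out n a b]| <= size W + size W)%N.
Proof. exact: leq_trans (card_sym_graph_nbrs _ _) (leq_add (card_out_le _) (card_in_le _)). Qed.

Lemma gprec_translation_cayley :
  (forall x, ggen (fun s => List.In s S) x) -> gprec (sym_graph out) cayley_graph.
Proof.
move=> S_gen.
have [r W_near] : exists r, forall w, w \in W ->
    forall n y, dist_le cayley_graph (pi n y) (pi n (w * y)) r.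
  apply: seq_uniform_bound => [w r r' rr' wr n y|w _].
    exact: dist_le_leq rr' (wr n y).
  have [r wr] := gen_dist_bounded (P := fun _ => True) (Y := fun _ => True)
    cayley_graph_sym (fun _ _ _ _ => I) (fun s n y Ss _ _ => cayley_step n y Ss) (S_gen w).
  by exists r => n y; apply: wr.
apply: gprec_sym_graph (ltn0Sn r) cayley_graph_sym _ => n a b /out_translates [w Ww ->].
by rewrite -{1}(pi_rep a); apply: dist_le_leq (leqnSn r) (W_near w Ww n _).
Qed.
End TranslationGraph.

Section SparseGraph.
Variables (k : nat) (l : seq gT).
Hypothesis l_gen : ggenerates l (Gam k).
Local Notation K := (Gam k).

Definition toK x := if `[< K x >] then x else (rep (pi k x))^-1 * x.

Definition toK_words := 1 :: [seq (rep c)^-1 | c <- enum 'I_(m k)].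

Lemma toK_in x : K (toK x).
Proof. by rewrite /toK; case: asboolP => // _; apply/pi_eqP; rewrite pi_rep. Qed.

Lemma toK_words_mul x : exists2 u, u \in toK_words & toK x = u * x.
Proof.
rewrite /toK; case: asboolP => _; first by exists 1; rewrite ?mem_head ?mul1g.
by exists (rep (pi k x))^-1; rewrite // inE (map_f (fun c => (rep c)^-1)) ?mem_enum ?orbT.
Qed.

Lemma K_rep n x : (k <= n)%N -> K (rep (pi n x)) <-> K x.
Proof.
move=> le; have subK := Gam_sub k.
have Kd : K (x^-1 * rep (pi n x)) by apply/(Gam_le le)/pi_eqP; rewrite pi_rep.
split=> [Kr|Kx]; last by rewrite -(mulVKg x (rep (pi n x))); apply: (subgroupM subK Kx Kd).
have -> : x = rep (pi n x) * (x^-1 * rep (pi n x))^-1 by rewrite invgM invgK mulVKg.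
exact: (subgroupM subK Kr (subgroupV subK Kd)).
Qed.

Definition sparse_out n (j : 'I_(m n)) : seq 'I_(m n) :=
  if (n < k)%N then cayley_out j
  else if `[< K (rep j) >] then [seq pi n (g * rep j) | g <- l]
  else [:: pi n (toK (rep j))].

Definition sparse_graph := sym_graph sparse_out.

Definition sparse_words := S ++ l ++ [seq (rep c)^-1 | c <- enum 'I_(m k)].

Lemma sparse_out_translates n (j b : 'I_(m n)) :
  b \in sparse_out j -> exists2 w, w \in sparse_words & b = pi n (w * rep j).
Proof.
rewrite /sparse_out /sparse_words; case: ltnP => _; last case: asboolP => Kj.
- by move/mapP => [s Ss ->]; exists s; rewrite // mem_cat Ss.
- by move/mapP => [g lg ->]; exists g; rewrite // !mem_cat lg orbT.
rewrite inE /toK => /eqP ->; case: asboolP => [/Kj []|_].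
by exists (rep (pi k (rep j)))^-1; rewrite // !mem_cat (map_f (fun c => (rep c)^-1)) ?mem_enum ?orbT.
Qed.

Lemma sparse_step n x g : (k <= n)%N -> g \in l -> K x ->
  dist_le sparse_graph (pi n x) (pi n (g * x)) 1.
Proof.
move=> le lg Kx; apply: dist_le_out.
rewrite /sparse_out ltnNge le /=; case: asboolP => [_|]; last by rewrite K_rep.
by apply/mapP; exists g => //; apply: pi_mull; rewrite pi_rep.
Qed.

Lemma dist_toK n x : (k <= n)%N -> dist_le sparse_graph (pi n x) (pi n (toK x)) 1.
Proof.
move=> le; rewrite /toK; case: asboolP => Kx; first exact: dist_le_refl.
apply: dist_le_out; rewrite /sparse_out ltnNge le /=.
case: asboolP => [/(K_rep x le)/Kx []|_]; rewrite inE /toK.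
case: asboolP => [/(K_rep x le)/Kx []|_]; rewrite pi_rep_le //.
by apply/eqP/pi_mull; rewrite pi_rep.
Qed.

(* toK (s * x) = z * toK x for some z in this list, whatever x and s \in S. *)
Definition bridge_words :=
  [seq u * w | u <- toK_words, w <- [seq s * v^-1 | s <- S, v <- toK_words]].

Lemma bridge_dist : exists r, forall z, z \in bridge_words -> K z ->
  forall n y, (k <= n)%N -> K y -> dist_le sparse_graph (pi n y) (pi n (z * y)) r.
Proof.
have subK := Gam_sub k; have [l_K K_gen] := l_gen.
apply: seq_uniform_bound => [z r r' rr' zr Kz n y le Ky|z _].
  exact: dist_le_leq rr' (zr Kz n y le Ky).
have [Kz|nKz] := asboolP (K z); last by exists 0%N => /nKz.
have Y_closed w y : ggen (fun g => List.In g l) w -> K y -> K (w * y).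
  by move=> gw; apply: (subgroupM subK (gen_subgroup subK l_K gw)).
have l_step g n y : List.In g l -> (k <= n)%N -> K y ->
    dist_le sparse_graph (pi n y) (pi n (g * y)) 1.
  by move=> /InP lg le Ky; apply: sparse_step.
have [r zr] := gen_dist_bounded (sym_graphC sparse_out) Y_closed l_step ((K_gen z).1 Kz).
by exists r.
Qed.

Lemma cayley_step_sparse_dist : exists L, forall n x s, (k <= n)%N -> s \in S ->
  dist_le sparse_graph (pi n x) (pi n (s * x)) L.
Proof.
have subK := Gam_sub k; have [r bridge_near] := bridge_dist.
exists (1 + r + 1)%N => n x s le Ss.
have [u Uu ux] := toK_words_mul x; have [v Uv vsx] := toK_words_mul (s * x).
set z := v * (s * u^-1).
have zx : z * toK x = toK (s * x) by rewrite /z ux vsx -!mulgA mulKg.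
have Kz : K z.
  rewrite -(mulgK (toK x) z) zx.
  exact: (subgroupM subK (toK_in _) (subgroupV subK (toK_in _))).
have zB : z \in bridge_words.
  exact: allpairs_f Uv (allpairs_f (fun s v => s * v^-1) Ss Uu).
apply: dist_le_trans _ (dist_le_sym (sym_graphC _ _) (dist_toK (s * x) le)).
apply: dist_le_trans (dist_toK x le) _; rewrite -zx.
exact: bridge_near zB Kz n _ le (toK_in x).
Qed.

Lemma gprec_cayley_sparse : gprec cayley_graph sparse_graph.
Proof.
have [L L_near] := cayley_step_sparse_dist.
rewrite cayley_graphE; apply: (@gprec_sym_graph _ _ _ L.+1) => // [n|n a b].
  exact: sym_graphC.
move=> /mapP [s Ss ->]; case: (ltnP n k) => [lt|le].
  apply: dist_le_leq (dist_le_out _) => //; rewrite /sparse_out lt; exact: map_f.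
by rewrite -{1}(pi_rep a); apply: dist_le_leq (leqnSn L) (L_near n _ s le Ss).
Qed.

Definition K_cosets n := [set j : 'I_(m n) | `[< K (rep j) >]].

Lemma num_edges_sparse n : (k <= n)%N ->
  (num_edges sparse_graph n <= #|K_cosets n| * size l + m n)%N.
Proof.
move=> le; apply: leq_trans (num_edges_sym_graph sparse_out n) _.
have size_out a : (size (sparse_out a) <= (if a \in K_cosets n then size l else 0) + 1)%N.
  by rewrite /sparse_out ltnNge le inE; case: asboolP => _ /=; rewrite ?size_map ?leq_addr.
apply: leq_trans (leq_sum _ (fun a _ => size_out a)) _.
by rewrite big_split /= -big_mkcond sum_nat_const sum1_card card_ord.
Qed.

Lemma card_K_cosets n : (k <= n)%N -> (#|K_cosets n| * m k <= m n)%N.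
Proof.
move=> le; have subK := Gam_sub k.
pose F (q : 'I_(m n) * 'I_(m k)) := pi n (rep q.2 * rep q.1).
have F_inj : {in finset.setX (K_cosets n) [set: 'I_(m k)] &, injective F}.
  move=> [j c] [j' c']; rewrite !inE /= !andbT => /asboolP Kj /asboolP Kj' /pi_eqP e.
  have cc' : c = c'.
    rewrite -(pi_rep c) -(pi_rep c'); apply/pi_eqP.
    have -> : (rep c)^-1 * rep c' =
        rep j * ((rep c * rep j)^-1 * (rep c' * rep j')) * (rep j')^-1.
      by rewrite invgM -!mulgA mulVKg mulgV mulg1.
    exact: (subgroupM subK (subgroupM subK Kj (Gam_le le e)) (subgroupV subK Kj')).
  subst c'; congr (_, _); rewrite -(pi_rep j) -(pi_rep j'); apply/pi_eqP.
  by move: e; rewrite invgM -mulgA mulKg.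
have <- : #|finset.setX (K_cosets n) [set: 'I_(m k)]| = (#|K_cosets n| * m k)%N.
  by rewrite cardsX cardsT card_ord.
rewrite -(card_in_imset F_inj); apply: leq_trans (max_card _) _.
by rewrite card_ord.
Qed.
End SparseGraph.
End Tower.

Lemma limn_einf_le_eventually (R : realType) (u : (\bar R)^nat) (b : \bar R) n0 :
  (forall n, (n0 <= n)%N -> (u n <= b)%E) -> (limn_einf u <= b)%E.
Proof.
move=> u_le; rewrite limn_einf_lim.
rewrite (cvg_lim (@ereal_normedtype.ereal_hausdorff R) (@cvg_einfs_sup R u)).
apply: ge_ereal_sup => _ [n _ <-]; rewrite /einfs /=.
apply: (@le_trans _ _ (u (maxn n n0))); last by apply: u_le; apply: leq_maxr.
by apply: ereal_inf_lbound; exists (maxn n n0) => //; apply: leq_maxl.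
Qed.

Lemma edge_ratio_le (R : realFieldType) (E A d mn mk : nat) :
  (0 < mn)%N -> (0 < mk)%N -> (E <= A * d + mn)%N -> (A * mk <= mn)%N ->
  (E%:R / mn%:R <= d%:R / mk%:R + 1 :> R)%R.
Proof.
move=> mn_gt0 mk_gt0 E_le A_le.
have E_mk : (E * mk <= d * mn + mn * mk)%N.
  apply: leq_trans (leq_mul E_le (leqnn mk)) _.
  by rewrite mulnDl leq_add2r mulnAC [(d * mn)%N]mulnC leq_mul2r A_le orbT.
rewrite ler_pdivrMr ?ltr0n // -(@ler_pM2r _ mk%:R) ?ltr0n //.
have -> : ((d%:R / mk%:R + 1) * mn%:R * mk%:R = (d * mn + mn * mk)%N%:R :> R)%R.
  by rewrite natrD !natrM; field; rewrite pnatr_eq0 -lt0n.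
by rewrite -natrM ler_nat.
Qed.

Theorem cayley_cost_le (R : realType) (gT : groupType) (Gam : nat -> gT -> Prop)
    (S : seq gT) (m : nat -> nat) (pi : forall n, gT -> 'I_(m n)) :
  infinite_carrier gT ->
  (forall n, gsubgroup (Gam n)) ->
  (forall n x, Gam n.+1 x -> Gam n x) ->
  (forall x, (forall n, Gam n x) -> x = 1%g) ->
  (forall x, ggen (fun s => List.In s S) x) ->
  (forall n, glabelling (Gam n) (pi n)) ->
  forall k l, ggenerates l (Gam k) ->
  (c_of (cayley_graph pi S) <= ((size l)%:R / (m k)%:R + 1 : R)%:E)%E.
Proof.
move=> gT_inf Gam_sub Gam_nested Gam_sep S_gen lab k l l_gen.
have out_translates := @sparse_out_translates _ _ _ _ lab S k l.
set H := sparse_graph lab S k l.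
apply: (@le_trans _ _ (e_of H)).
  apply: ereal_inf_lbound; exists H; split=> //.
    split; [exact: sym_graph_irr | by move=> n x y; apply: sym_graphC | | exact: (m_unbounded Gam_nested lab gT_inf Gam_sep)].
    by eexists => n x; exact: (translation_graph_deg out_translates).
  split; first exact: (gprec_translation_cayley out_translates S_gen).
  exact: gprec_cayley_sparse.
apply: (limn_einf_le_eventually (n0 := k)) => n le; rewrite lee_fin.
apply: (edge_ratio_le R (m_gt0 pi n) (m_gt0 pi k) (num_edges_sparse lab S l le)).
exact: (card_K_cosets Gam_sub Gam_nested lab le).
Qed.

(* Gam n stands for Γ_(n+1). *)
Theorem lemma3 (R : realType) (T : Type) (mul : T -> T -> T) (one : T) (inv : T -> T)
  (Gam : nat -> T -> Prop) (S : seq T) (m : nat -> nat) (pi : forall n, T -> 'I_(m n)) :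
  is_group mul one inv ->
  infinite_carrier T ->
  (forall n, is_normal mul one inv (Gam n)) ->
  (forall n x, Gam n.+1 x -> Gam n x) ->
  (forall x, (forall n, Gam n x) -> x = one) ->
  (forall x, gen mul one inv (fun y => List.In y S) x) ->
  (forall n, coset_labelling mul inv (Gam n) (pi n)) ->
  forall (k d : nat), min_num_gens mul one inv (Gam k) d ->
  (c_of (fun n => cayley_adj mul S (pi n)) <= ((d%:R / (m k)%:R + 1 : R))%:E)%E.
Proof.
move=> laws T_inf Gam_normal Gam_nested Gam_sep S_gen lab k d [[l [<- l_gen]] _].
exact: (@cayley_cost_le R (group_of_laws laws) Gam S m pi T_inf
  (fun n => (Gam_normal n).1) Gam_nested Gam_sep S_gen lab k l l_gen).
Qed.
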